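(* Let $0<\nu<1$ and let $R,S,T,U>0$ satisfy \[ T=-\tfrac{1}{3}(\nu+1)R+\frac{R^2}{R+S}+\tfrac12,\qquad U=\tfrac16\Big(2S\big(\nu-\tfrac{3R}{R+S}+1\big)+3\Big). \] For $\theta\in\mathbb{R}$ let \[ A(\theta)=\begin{pmatrix} 1-\nu\big(1+(1-\nu)(U-T)\big)(1-e^{-I\theta}) & \nu(1-\nu)(Ue^{-I\theta}-T)(1-e^{-I\theta})\\ \nu(1-\nu)(R+S) & (1-\nu)(1-\nu R)+\nu\big(1-(1-\nu)S\big)e^{-I\theta} \end{pmatrix}, \] where $I$ is the imaginary unit, and let $\lambda_1(\theta)$ be the eigenvalue of $A(\theta)$ depending analytically on $\theta$ near $0$ with $\lambda_1(0)=1$. Then \[ \lambda_1(\theta)-e^{-I\nu\theta}=\frac{1}{72}(\nu-1)\nu\Big((\nu-2)(\nu+1)+\frac{18}{R+S}\Big)\theta^4+O(\theta^5)\quad(\theta\to0). \]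
   Context: $A(\theta)$ is the amplification matrix, acting on Fourier amplitudes $(\hat Q,\hat q)$ of cell averages and interface point values, of the following parameterized Active Flux scheme for $q_t+aq_x=0$, $a>0$, on a uniform grid with cells $[x_{i-1/2},x_{i+1/2}]$ of width $\Delta x$ and Courant number $\nu=a\Delta t/\Delta x$: $q^{n+1}_{i+1/2}=(1-\nu)q^n_{i+1/2}+\nu q^n_{i-1/2}-\nu(1-\nu)\big(R(q^n_{i+1/2}-Q^n_i)-S(Q^n_i-q^n_{i-1/2})\big)$, $\bar q_{i+1/2}=Q^n_i+(1-\nu)\big(T(q^n_{i+1/2}-Q^n_i)+U(Q^n_i-q^n_{i-1/2})\big)$, $Q^{n+1}_i=Q^n_i-\nu(\bar q_{i+1/2}-\bar q_{i-1/2})$. The exact amplification factor is $e^{-I\nu\theta}$. At $\theta=0$ the two eigenvalues of $A$ are $1$ and $1-\nu(1-\nu)(R+S)\neq1$, so $\lambda_1$ is well defined near $\theta=0$. *)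

From HB Require Import structures.
From mathcomp Require Import all_boot all_order all_algebra.
From mathcomp Require Import reals trigo.
From mathcomp Require Import complex.
Set Implicit Arguments. Unset Strict Implicit. Unset Printing Implicit Defensive.
Import Order.TTheory GRing.Theory Num.Theory.
Local Open Scope ring_scope.
Local Open Scope complex_scope.

Definition expi (R : realType) (x : R) : R[i] := cos x +i* sin x.

Definition Amat (R : realType) (nu r s t u th : R) : 'M[R[i]]_2 :=
  let e := expi (- th) in
  let n := nu%:C in
  let a11 := 1 - n * (1 + (1 - n) * (u%:C - t%:C)) * (1 - e) in
  let a12 := n * (1 - n) * (u%:C * e - t%:C) * (1 - e) in
  let a21 := n * (1 - n) * (r%:C + s%:C) in
  let a22 := (1 - n) * (1 - n * r%:C) + n * (1 - (1 - n) * s%:C) * e in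
  \matrix_(i < 2, j < 2)
    if (i == 0 :> nat) then (if (j == 0 :> nat) then a11 else a12)
    else (if (j == 0 :> nat) then a21 else a22).

From HB Require Import structures.
From mathcomp Require Import all_boot all_order all_algebra.
From mathcomp Require Import reals trigo complex.
From mathcomp Require Import derive normedtype topology.
From mathcomp Require Import ring lra.
Set Implicit Arguments. Unset Strict Implicit. Unset Printing Implicit Defensive.
Import Order.TTheory GRing.Theory Num.Theory.
Import numFieldNormedType.Exports.
Local Open Scope ring_scope.
Local Open Scope complex_scope.

(** Put z = 1 - e^{-iθ} and y = λ - 1. Then det (λ - A(θ)) is
   k (y + ν z) + y^2 + a y z + b z^2 with k = ν (1 - ν) (R + S) > 0, so the
   eigenvalue λ_1 near 1 is a simple root. Let μ = e^{-iνθ} + c θ^4 with c the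
   claimed constant. Inserting the degree-4 Taylor polynomials (in iθ) of z and
   of μ - 1, the coefficients of θ^0, ..., θ^4 vanish thanks to the relations
   defining T and U and the value of c, so the characteristic polynomial at μ
   is O(θ^5). It vanishes at λ_1, and its difference quotient between λ_1 and μ,
   k + (λ_1 - 1) + (μ - 1) + a z, stays close to k; hence λ_1 - μ = O(θ^5).
   The Taylor remainders of e^{iθ} come from the alternating polynomial bounds
   on sin and cos, each derived from the previous one by monotonicity. *)

Section TrigTaylor.
Variable R : realType.
Implicit Types x : R.

Lemma ge0_derive_ge0 (f df : R -> R) :
  (forall x, is_derive x 1 f (df x)) -> f 0 = 0 ->
  (forall x, 0 <= x -> 0 <= df x) -> forall x, 0 <= x -> 0 <= f x.
Proof.
move=> fd f0 dfge0 x x0; suff : 0 <= f x - f 0 by rewrite f0 subr0.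
have [|c c0x ->] := MVT_segment x0 (fun y _ => fd y).
  apply: continuous_subspaceT => y.
  exact/differentiable_continuous/derivable1_diffP/(@ex_derive _ _ _ _ _ _ _ (fd y)).
rewrite mulr_ge0 ?subr0 //; apply: dfge0.
by move: c0x; rewrite in_itv /= => /andP[].
Qed.

Ltac derive_poly_trig :=
  move=> y; apply: is_derive_eq; rewrite /GRing.scale /=; field.

Lemma sin_le_id x : 0 <= x -> sin x <= x.
Proof.
move=> x0; rewrite -subr_ge0.
apply: (@ge0_derive_ge0 (fun y => y - sin y) (fun y => 1 - cos y) _ _ _ _ x0).
- by rewrite sin0 subr0.
- by move=> y _; rewrite subr_ge0 cos_le1.
Qed.

Lemma cos_ge_taylor2 x : 0 <= x -> 1 - x ^+ 2 / 2 <= cos x.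
Proof.
move=> x0; rewrite -subr_ge0.
apply: (@ge0_derive_ge0 (fun y => cos y - (1 - y ^+ 2 / 2)) (fun y => y - sin y)
  _ _ _ _ x0).
- by derive_poly_trig.
- by rewrite cos0 expr0n /=; ring.
- by move=> y /sin_le_id; rewrite subr_ge0.
Qed.

Lemma sin_ge_taylor3 x : 0 <= x -> x - x ^+ 3 / 6 <= sin x.
Proof.
move=> x0; rewrite -subr_ge0.
apply: (@ge0_derive_ge0 (fun y => sin y - (y - y ^+ 3 / 6))
  (fun y => cos y - (1 - y ^+ 2 / 2)) _ _ _ _ x0).
- by derive_poly_trig.
- by rewrite sin0 expr0n /=; ring.
- by move=> y /cos_ge_taylor2; rewrite subr_ge0.
Qed.

Lemma cos_le_taylor4 x : 0 <= x -> cos x <= 1 - x ^+ 2 / 2 + x ^+ 4 / 24.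
Proof.
move=> x0; rewrite -subr_ge0.
apply: (@ge0_derive_ge0 (fun y => 1 - y ^+ 2 / 2 + y ^+ 4 / 24 - cos y)
  (fun y => sin y - (y - y ^+ 3 / 6)) _ _ _ _ x0).
- by derive_poly_trig.
- by rewrite cos0 expr0n /=; ring.
- by move=> y /sin_ge_taylor3; rewrite subr_ge0.
Qed.

Lemma sin_le_taylor5 x : 0 <= x -> sin x <= x - x ^+ 3 / 6 + x ^+ 5 / 120.
Proof.
move=> x0; rewrite -subr_ge0.
apply: (@ge0_derive_ge0 (fun y => y - y ^+ 3 / 6 + y ^+ 5 / 120 - sin y)
  (fun y => 1 - y ^+ 2 / 2 + y ^+ 4 / 24 - cos y) _ _ _ _ x0).
- by derive_poly_trig.
- by rewrite sin0 expr0n /=; ring.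
- by move=> y /cos_le_taylor4; rewrite subr_ge0.
Qed.

Lemma cos_ge_taylor6 x : 0 <= x ->
  1 - x ^+ 2 / 2 + x ^+ 4 / 24 - x ^+ 6 / 720 <= cos x.
Proof.
move=> x0; rewrite -subr_ge0.
apply: (@ge0_derive_ge0
  (fun y => cos y - (1 - y ^+ 2 / 2 + y ^+ 4 / 24 - y ^+ 6 / 720))
  (fun y => y - y ^+ 3 / 6 + y ^+ 5 / 120 - sin y) _ _ _ _ x0).
- by derive_poly_trig.
- by rewrite cos0 expr0n /=; ring.
- by move=> y /sin_le_taylor5; rewrite subr_ge0.
Qed.

Lemma sin_cos_taylor_err x : `|x| <= 1 ->
  `|sin x - (x - x ^+ 3 / 6)| <= `|x| ^+ 5 /\
  `|cos x - (1 - x ^+ 2 / 2 + x ^+ 4 / 24)| <= `|x| ^+ 5.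
Proof.
wlog x0 : x / 0 <= x => [hwlog x1|].
  have [/hwlog/(_ x1)//|/ltW x_le0] := lerP 0 x.
  have [] := hwlog (- x); rewrite ?oppr_ge0 ?normrN // sinN cosN => hs hc.
  split; last by move: hc; congr (_ <= _); congr `|_|; ring.
  by rewrite -normrN; move: hs; congr (_ <= _); congr `|_|; ring.
rewrite ger0_norm // => x1.
have x65 : x ^+ 6 <= x ^+ 5 by rewrite exprS ler_piMl // exprn_ge0.
have := sin_ge_taylor3 x0; have := sin_le_taylor5 x0.
have := cos_le_taylor4 x0; have := cos_ge_taylor6 x0.
by move=> *; split; rewrite ler_norml; lra.
Qed.
End TrigTaylor.

Definition exp_taylor4 (F : fieldType) (a : F) : {poly F} :=
  \poly_(i < 5) (a ^+ i / i`!%:R).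

Lemma horner_exp_taylor4 (F : numFieldType) (a w : F) :
  (exp_taylor4 a).[w] =
  1 + a * w + (a * w) ^+ 2 / 2 + (a * w) ^+ 3 / 6 + (a * w) ^+ 4 / 24.
Proof.
rewrite horner_poly !big_ord_recl big_ord0 /= /bump /factorial /addn /muln /=.
by rewrite !exprMn; field.
Qed.

Lemma norm_horner_le (F : numDomainType) (P : {poly F}) m (w : F) :
  (forall j, (j < m)%N -> P`_j = 0) -> `|w| <= 1 ->
  `|P.[w]| <= (\sum_(j < size P) `|P`_j|) * `|w| ^+ m.
Proof.
move=> P_low w1; rewrite horner_coef mulr_suml.
apply: le_trans (ler_norm_sum _ _ _) _; apply: ler_sum => j _.
rewrite normrM normrX; have [jm|mj] := ltnP j m.
  by rewrite P_low // normr0 !mul0r.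
by rewrite ler_wpM2l // ler_wiXn2l.
Qed.

Section ComplexTaylor.
Variable R : realType.
Local Notation C := R[i].

Lemma normc_real (x : R) : `|x%:C| = `|x|%:C.
Proof. by rewrite normc_def /= expr0n /= addr0 sqrtr_sqr. Qed.

Lemma norm_i : `|'i : C| = 1.
Proof. by rewrite normc_def /= expr0n /= add0r expr1n sqrtr1. Qed.

Lemma ge0_complex_real (K : C) : 0 <= K -> exists2 k : R, 0 <= k & K = k%:C.
Proof.
move=> K0; have Kr : (complex.Re K)%:C = K by rewrite RRe_real ?ger0_real.
by exists (complex.Re K); rewrite // -ler0c Kr.
Qed.

Lemma expr_i4 : ('i : C) ^+ 4 = 1.
Proof. by rewrite -[4%N]/(2 + 2)%N exprD sqr_i mulN1r opprK. Qed.

Lemma normc_Re (w : C) : `|w| = (complex.Re `|w|)%:C.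
Proof. by rewrite RRe_real ?normr_real. Qed.

Lemma norm_i_real (x : R) : `|'i * x%:C| = `|x|%:C.
Proof. by rewrite normrM norm_i mul1r normc_real. Qed.

Lemma expi_taylor_err (x : R) : `|x| <= 1 ->
  `|expi x - (exp_taylor4 1).['i * x%:C]| <= 2 * `|x|%:C ^+ 5.
Proof.
move=> x1; have [sin_err cos_err] := sin_cos_taylor_err x1.
have -> : expi x - (exp_taylor4 1).['i * x%:C] =
    (cos x - (1 - x ^+ 2 / 2 + x ^+ 4 / 24))%:C +
    'i * (sin x - (x - x ^+ 3 / 6))%:C.
  have -> : expi x = (cos x)%:C + 'i * (sin x)%:C by rewrite [LHS]complexE.
  have i3 : ('i : C) ^+ 3 = - 'i by rewrite -[3%N]/(2 + 1)%N exprD sqr_i mulN1r.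
  rewrite horner_exp_taylor4 mul1r !exprMn sqr_i i3 expr_i4.
  rewrite !(rmorphB, rmorphD, rmorphM, rmorphXn, fmorphV, rmorph_nat, rmorph1).
  by field.
apply: le_trans (ler_normD _ _) _; rewrite norm_i_real normc_real mulr2n mulrDl mul1r.
by apply: lerD; rewrite -rmorphXn lecR.
Qed.
End ComplexTaylor.

Definition char_form (Rg : comPzRingType) (k n a b z y : Rg) : Rg :=
  k * (y + n * z) + y ^+ 2 + a * y * z + b * z ^+ 2.

Lemma char_formBr (Rg : comPzRingType) (k n a b z y y' : Rg) :
  char_form k n a b z y - char_form k n a b z y' =
  (y - y') * (k + y + y' + a * z).
Proof. by rewrite /char_form; ring. Qed.

Lemma char_formB (Rg : comPzRingType) (k n a b z y z' y' : Rg) :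
  char_form k n a b z y - char_form k n a b z' y' =
  (y - y') * (k + y + y' + a * z) + (z - z') * (k * n + a * y' + b * (z + z')).
Proof. by rewrite /char_form; ring. Qed.

Lemma horner_char_form (F : comNzRingType) (k n a b : F) (p q : {poly F}) x :
  (char_form k%:P n%:P a%:P b%:P p q).[x] = char_form k n a b p.[x] q.[x].
Proof.
by rewrite /char_form !(hornerD, hornerM, hornerC, hornerXn, horner_exp).
Qed.

Lemma coef_char_form (F : comNzRingType) (k n a b : F) (p q : {poly F}) j :
  (char_form k%:P n%:P a%:P b%:P p q)`_j =
  k * (q`_j + n * p`_j) + (q * q)`_j + a * (q * p)`_j + b * (p * p)`_j.
Proof. by rewrite /char_form -!mulrA !expr2 !coefE. Qed.

Section PowerBounds.
Variable R : realType.
Local Notation C := R[i].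

Definition bigO_pow (m : nat) (g : R -> C) : Prop :=
  exists2 K : C, 0 <= K &
    forall th : R, `|th| <= 1 -> `|g th| <= K * `|th|%:C ^+ m.

Lemma bigO_pow_ext m (f g : R -> C) :
  (forall th, f th = g th) -> bigO_pow m f -> bigO_pow m g.
Proof. by move=> fg [K K0 hf]; exists K => // th; rewrite -fg; apply: hf. Qed.

Lemma bigO_powW m p (f : R -> C) : (m <= p)%N -> bigO_pow p f -> bigO_pow m f.
Proof.
move=> mp [K K0 hf]; exists K => // th th1; apply: le_trans (hf _ th1) _.
by rewrite ler_wpM2l // ler_wiXn2l // ?ler0c // -(rmorph1 (real_complex R)) lecR.
Qed.

Lemma bigO_powD m (f g : R -> C) :
  bigO_pow m f -> bigO_pow m g -> bigO_pow m (fun th => f th + g th).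
Proof.
move=> [K K0 hf] [L L0 hg]; exists (K + L); first exact: addr_ge0.
move=> th th1; rewrite mulrDl.
exact: le_trans (ler_normD _ _) (lerD (hf _ th1) (hg _ th1)).
Qed.

Lemma bigO_powN m (f : R -> C) : bigO_pow m f -> bigO_pow m (fun th => - f th).
Proof. by move=> [K K0 hf]; exists K => // th; rewrite normrN; apply: hf. Qed.

Lemma bigO_powM m p (f g : R -> C) :
  bigO_pow m f -> bigO_pow p g -> bigO_pow (m + p) (fun th => f th * g th).
Proof.
move=> [K K0 hf] [L L0 hg]; exists (K * L); first exact: mulr_ge0.
move=> th th1; rewrite normrM exprD mulrACA.
by apply: ler_pM => //; [apply: hf | apply: hg].
Qed.

Lemma bigO_pow_cst (a : C) : bigO_pow 0 (fun=> a).
Proof. by exists `|a| => // th _; rewrite expr0 mulr1. Qed.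

Lemma bigO_pow_horner m (P : {poly C}) :
  (forall j, (j < m)%N -> P`_j = 0) -> bigO_pow m (fun th => P.['i * th%:C]).
Proof.
move=> P_low; exists (\sum_(j < size P) `|P`_j|); first exact: sumr_ge0.
move=> th th1; rewrite -norm_i_real; apply: norm_horner_le => //.
by rewrite norm_i_real -(rmorph1 (real_complex R)) lecR.
Qed.

Lemma bigO_pow_taylor (a : R) : `|a| <= 1 ->
  bigO_pow 5 (fun th => expi (a * th) - (exp_taylor4 a%:C).['i * th%:C]).
Proof.
move=> a1; exists 2 => // th th1.
have ath : `|a * th| <= `|th| by rewrite normrM ler_piMl.
have -> : (exp_taylor4 a%:C).['i * th%:C] = (exp_taylor4 1).['i * (a * th)%:C].
  by rewrite !horner_exp_taylor4 rmorphM /=; congr (_ + _ + _ + _ + _); ring.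
apply: le_trans (expi_taylor_err (le_trans ath th1)) _.
by rewrite ler_pM2l // -!rmorphXn lecR lerXn2r // nnegrE.
Qed.

Lemma bigO_pow1_small (g : R -> C) : bigO_pow 1 g ->
  forall eps : R, 0 < eps ->
  exists2 d : R, 0 < d & forall th, `|th| < d -> `|g th| < eps%:C.
Proof.
move=> [K K0 hg] eps eps0.
have [k k0 Kk] := ge0_complex_real K0; rewrite {}Kk in hg.
have k1 : 0 < k + 1 by lra.
exists (Num.min 1 (eps / (k + 1))); first by rewrite lt_min ltr01 divr_gt0.
move=> th; rewrite lt_min ltr_pdivlMr // => /andP[th1 th_eps].
apply: le_lt_trans (hg _ (ltW th1)) _; rewrite expr1 -rmorphM ltcR.
by have := normr_ge0 th; nra.
Qed.

Lemma bigO_pow_char_formB m (k n a b : C) (z y z' y' : R -> C) :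
  bigO_pow m (fun th => z th - z' th) -> bigO_pow m (fun th => y th - y' th) ->
  bigO_pow 0 z' -> bigO_pow 0 y' ->
  bigO_pow m (fun th =>
    char_form k n a b (z th) (y th) - char_form k n a b (z' th) (y' th)).
Proof.
move=> dz dy hz' hy'.
have hz : bigO_pow 0 z.
  by apply: bigO_pow_ext (bigO_powD (bigO_powW _ dz) hz') => // th; rewrite subrK.
have hy : bigO_pow 0 y.
  by apply: bigO_pow_ext (bigO_powD (bigO_powW _ dy) hy') => // th; rewrite subrK.
have Mcst (f : R -> C) e : bigO_pow 0 f -> bigO_pow 0 (fun th => e * f th).
  exact: bigO_powM (bigO_pow_cst e).
rewrite -[m]addn0; apply: bigO_pow_ext; first by move=> th; rewrite char_formB.
apply: bigO_powD; apply: bigO_powM => //.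
- apply: bigO_powD; last exact: Mcst.
  by apply: bigO_powD => //; apply: bigO_powD => //; apply: bigO_pow_cst.
- apply: bigO_powD; last by apply: Mcst; apply: bigO_powD.
  by apply: bigO_powD; [apply: bigO_pow_cst | apply: Mcst].
Qed.

Lemma bigO_pow_div m (g h G : R -> C) (kap d : R) : 0 < kap -> 0 < d ->
  (forall th, `|th| < d -> g th * h th = G th /\ kap%:C <= `|h th|) ->
  bigO_pow m G ->
  exists2 K : R, 0 < K & exists2 d' : R, 0 < d' &
    forall th, `|th| < d' -> `|g th| <= K%:C * `|th|%:C ^+ m.
Proof.
move=> kap0 d0 ghG [K K0 hG].
have [k k0 Kk] := ge0_complex_real K0; rewrite {}Kk in hG.
exists (k / kap + 1); first by have := divr_ge0 k0 (ltW kap0); lra.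
exists (Num.min d 1); first by rewrite lt_min d0 ltr01.
move=> th; rewrite lt_min => /andP[thd th1]; have [gh h_lb] := ghG th thd.
have : `|g th| * kap%:C <= k%:C * `|th|%:C ^+ m.
  by apply: le_trans (hG _ (ltW th1)); rewrite -gh normrM ler_wpM2l.
rewrite -ler_pdivlMr ?ltcR // => /le_trans; apply.
rewrite -rmorphXn -fmorphV -!rmorphM lecR mulrAC mulrDl mul1r lerDl.
by rewrite exprn_ge0.
Qed.

End PowerBounds.

Definition af_k (F : pzRingType) (n r s : F) := n * (1 - n) * (r + s).
Definition af_a (F : pzRingType) (n s t u : F) :=
  n * (1 + (1 - n) * (u - t)) + n * (1 - (1 - n) * s).
Definition af_b (F : pzRingType) (n r s t u : F) :=
  n * (1 + (1 - n) * (u - t)) * (n * (1 - (1 - n) * s)) +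
  n * (1 - n) * u * af_k n r s.
Definition af_err (F : fieldType) (n r s : F) :=
  (n - 1) * n * ((n - 2) * (n + 1) + 18 / (r + s)) / 72.

Lemma det_mx22 (Rg : comPzRingType) (A : 'M[Rg]_2) :
  \det A = A 0 0 * A 1 1 - A 0 1 * A 1 0.
Proof.
have lift01 : lift 0 0 = 1 :> 'I_2 by apply/val_inj.
have lift10 : lift 1 0 = 0 :> 'I_2 by apply/val_inj.
rewrite (expand_det_row _ 0) !big_ord_recl big_ord0 /cofactor !det_mx11 !mxE.
by rewrite /= lift01 lift10 addr0 expr0 expr1 mul1r mulN1r mulrN.
Qed.

Lemma eigenvalue_det (F : fieldType) m (A : 'M[F]_m) a :
  eigenvalue A a -> \det (a%:M - A) = 0.
Proof.
move=> /eigenvalueP[v vA v_nz]; apply/eqP/det0P; exists v => //.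
by rewrite mulmxBr vA mul_mx_scalar subrr.
Qed.

Lemma det_Amat (R : realType) (nu r s t u th : R) (lam : R[i]) :
  \det (lam%:M - Amat nu r s t u th) =
  char_form (af_k nu%:C r%:C s%:C) nu%:C (af_a nu%:C s%:C t%:C u%:C)
    (af_b nu%:C r%:C s%:C t%:C u%:C) (1 - expi (- th)) (lam - 1).
Proof.
rewrite det_mx22 !mxE /= mulr1n mulr0n /char_form /af_b /af_a /af_k; ring.
Qed.

Lemma af_order_conditions (F : numFieldType) (n r s t u : F) : r + s != 0 ->
  t = - (n + 1) * r / 3 + r ^+ 2 / (r + s) + 1 / 2 ->
  u = (2 * s * (n - 3 * r / (r + s) + 1) + 3) / 6 ->
  forall j, (j < 5)%N ->
  (char_form (af_k n r s)%:P n%:P (af_a n s t u)%:P (af_b n r s t u)%:P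
     (1 - exp_taylor4 (-1)) (exp_taylor4 (- n) - 1 + (af_err n r s)%:P * 'X^4))`_j
  = 0.
Proof.
move=> rs0 ht hu [|[|[|[|[|j]]]]] // _; rewrite coef_char_form !coefM.
all: rewrite !big_ord_recl !big_ord0 /= !coefE /bump /factorial /subn /addn /muln /=.
all: by rewrite /af_b /af_k /af_a /af_err ht hu; field.
Qed.

Lemma eigenvalue_Amat (R : realType) (nu r s t u th : R) (lam : R[i]) :
  eigenvalue (Amat nu r s t u th) lam ->
  char_form (af_k nu%:C r%:C s%:C) nu%:C (af_a nu%:C s%:C t%:C u%:C)
    (af_b nu%:C r%:C s%:C t%:C u%:C) (1 - expi (- th)) (lam - 1) = 0.
Proof. by move/eigenvalue_det; rewrite det_Amat. Qed.

Section AmplificationEigenvalue.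
Variables (R : realType) (nu r s t u : R).
Hypotheses (nu01 : 0 < nu < 1) (r_gt0 : 0 < r) (s_gt0 : 0 < s).
Hypothesis ht : t = - (nu + 1) * r / 3 + r ^+ 2 / (r + s) + 1 / 2.
Hypothesis hu : u = (2 * s * (nu - 3 * r / (r + s) + 1) + 3) / 6.

Local Notation C := R[i].
Local Notation n := nu%:C.
Local Notation k := (af_k nu%:C r%:C s%:C).
Local Notation a := (af_a nu%:C s%:C t%:C u%:C).
Local Notation b := (af_b nu%:C r%:C s%:C t%:C u%:C).
Local Notation c := (af_err nu%:C r%:C s%:C).
Local Notation x th := ('i * th%:C).
Local Notation z th := (1 - expi (- th)).
Local Notation mu th := (expi (- (nu * th)) + c * x th ^+ 4).
Local Notation Pz := (1 - exp_taylor4 (-1) : {poly C}).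
Local Notation Pmu := (exp_taylor4 (- n) - 1 + c%:P * 'X^4).

Lemma z_taylor : bigO_pow 5 (fun th => z th - Pz.[x th]).
Proof.
apply: bigO_pow_ext (bigO_powN (@bigO_pow_taylor _ (-1) _)).
  by move=> th; rewrite mulN1r rmorphN1 !(hornerD, hornerN, hornerC); ring.
by rewrite normrN normr1.
Qed.

Lemma mu_taylor : bigO_pow 5 (fun th => mu th - 1 - Pmu.[x th]).
Proof.
apply: bigO_pow_ext (@bigO_pow_taylor _ (- nu) _).
  move=> th; rewrite mulNr rmorphN.
  by rewrite !(hornerD, hornerN, hornerC, hornerCM, hornerXn); ring.
by case/andP: nu01 => nu0 nu1; rewrite normrN ger0_norm ltW.
Qed.

Lemma char_form_mu_bigO5 :
  bigO_pow 5 (fun th => char_form k n a b (z th) (mu th - 1)).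
Proof.
have rsC : r%:C + s%:C != 0 by rewrite -rmorphD fmorph_eq0 gt_eqF ?addr_gt0.
have htC : t%:C = - (n + 1) * r%:C / 3 + r%:C ^+ 2 / (r%:C + s%:C) + 1 / 2.
  by rewrite ht !(rmorphD, rmorphM, rmorphN, rmorphXn, fmorphV, rmorph_nat, rmorph1).
have huC : u%:C = (2 * s%:C * (n - 3 * r%:C / (r%:C + s%:C) + 1) + 3) / 6.
  by rewrite hu !(rmorphD, rmorphB, rmorphN, rmorphM, rmorphXn, fmorphV, rmorph_nat,
    rmorph1).
have bounded (P : {poly C}) : bigO_pow 0 (fun th => P.[x th]) by apply: bigO_pow_horner.
have hP := bigO_pow_horner (af_order_conditions rsC htC huC).
have hB := @bigO_pow_char_formB _ _ k n a b _ _ _ _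
  z_taylor mu_taylor (bounded Pz) (bounded Pmu).
apply: bigO_pow_ext (bigO_powD hP hB) => th.
by rewrite horner_char_form subrKC.
Qed.

Lemma mu_az_bigO1 : bigO_pow 1 (fun th => mu th - 1 + a * z th).
Proof.
have hP : bigO_pow 1 (fun th => (Pmu + a%:P * Pz).[x th]).
  apply: bigO_pow_horner => -[|//] _.
  by rewrite !(coefD, coefN, coefCM, coef1, coefXn, coef_poly) /factorial /=; field.
have az := bigO_powM (bigO_pow_cst a) z_taylor.
apply: bigO_pow_ext (bigO_powD (bigO_powD (bigO_powW _ mu_taylor) (bigO_powW _ az)) hP) => //.
by move=> th; rewrite !(hornerD, hornerN, hornerC, hornerCM, hornerXn); ring.
Qed.

Lemma char_quotient_lower_bound (lam : R -> C) :
  (forall eps : R, 0 < eps -> exists2 d : R, 0 < d &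
     forall th : R, `|th| < d -> `|lam th - 1| < eps%:C) ->
  exists2 d : R, 0 < d & forall th : R, `|th| < d ->
    (nu * (1 - nu) * (r + s) / 2)%:C <=
    `|k + (lam th - 1) + (mu th - 1 + a * z th)|.
Proof.
move=> lam_cont; set kap := nu * (1 - nu) * (r + s).
have kap0 : 0 < kap.
  case/andP: nu01 => nu0 nu1.
  by apply: mulr_gt0; [apply: mulr_gt0; rewrite ?subr_gt0 | apply: addr_gt0].
have kC : k = kap%:C by rewrite /kap /af_k !(rmorphM, rmorphB, rmorphD, rmorph1).
have kap4 : 0 < kap / 4 by rewrite divr_gt0.
have [d1 d1_gt0 lam_near] := lam_cont _ kap4.
have [d2 d2_gt0 mu_near] := bigO_pow1_small mu_az_bigO1 kap4.
exists (Num.min d1 d2); first by rewrite lt_min d1_gt0.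
move=> th; rewrite lt_min => /andP[th1 th2].
have p_small := lam_near th th1; have q_small := mu_near th th2.
set p := lam th - 1 in p_small *; set q := mu th - 1 + a * z th in q_small *.
set D := k + p + q.
have k_le : `|k| <= `|D| + `|p| + `|q|.
  rewrite [X in `|X| <= _](_ : k = D - p - q); last by rewrite /D; ring.
  apply: le_trans (ler_normD _ _) _; rewrite normrN lerD2r.
  by apply: le_trans (ler_normD _ _) _; rewrite normrN.
move: k_le p_small q_small; rewrite kC normc_real ger0_norm ?(ltW kap0) //.
rewrite (normc_Re D) (normc_Re p) (normc_Re q) -!rmorphD !lecR !ltcR.
lra.
Qed.

End AmplificationEigenvalue.

Theorem mainTheorem1 (R : realType) (nu r s t u : R) :
  0 < nu < 1 -> 0 < r -> 0 < s -> 0 < t -> 0 < u ->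
  t = - (nu + 1) * r / 3 + r ^+ 2 / (r + s) + 1 / 2 ->
  u = (2 * s * (nu - 3 * r / (r + s) + 1) + 3) / 6 ->
  forall lam : R -> R[i],
  lam 0 = 1 ->
  (forall eps : R, 0 < eps -> exists2 d : R, 0 < d &
     forall th : R, `|th| < d -> `|lam th - 1| < eps%:C) ->
  (exists2 d : R, 0 < d &
     forall th : R, `|th| < d -> eigenvalue (Amat nu r s t u th) (lam th)) ->
  exists2 C : R, 0 < C & exists2 d : R, 0 < d &
    forall th : R, `|th| < d ->
      `|lam th - expi (- (nu * th))
        - ((nu - 1) * nu * ((nu - 2) * (nu + 1) + 18 / (r + s)) / 72)%:C
          * th%:C ^+ 4| <= C%:C * `|th|%:C ^+ 5.
Proof.
(* Positivity of t and u and the value lam 0 = 1 are not needed. *)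
move=> nu01 r_gt0 s_gt0 _ _ ht hu lam _ lam_cont [d0 d0_gt0 lam_eig].
have [d1 d1_gt0 quot_lb] := char_quotient_lower_bound t u nu01 r_gt0 s_gt0 lam_cont.
have kap2 : 0 < nu * (1 - nu) * (r + s) / 2.
  case/andP: nu01 => nu0 nu1; apply: divr_gt0 => //.
  by apply: mulr_gt0; [apply: mulr_gt0; rewrite ?subr_gt0 | apply: addr_gt0].
have cC : ((nu - 1) * nu * ((nu - 2) * (nu + 1) + 18 / (r + s)) / 72)%:C =
    af_err nu%:C r%:C s%:C.
  by rewrite /af_err !(rmorphB, rmorphD, rmorphM, fmorphV, rmorph_nat, rmorph1).
apply: (bigO_pow_div (d := Num.min d0 d1) kap2 _ _
  (bigO_powN (char_form_mu_bigO5 nu01 r_gt0 s_gt0 ht hu))).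
  by rewrite lt_min d0_gt0.
move=> th; rewrite lt_min => /andP[th_d0 th_d1].
split; last exact: quot_lb th th_d1.
rewrite -[RHS]sub0r -(eigenvalue_Amat (lam_eig th th_d0)) char_formBr.
by rewrite cC -[th%:C ^+ 4]mul1r -expr_i4 -exprMn; ring.
Qed.
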